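(* Let $R$ be a commutative ring with identity. Then $R[X]_A$ is a residually Noetherian ring if and only if $R$ is a residually Noetherian ring.
   Context: $X$ is an indeterminate over $R$, $A=\{f\in R[X]\mid f(0)=1\}$, and $R[X]_A$ is the localization of $R[X]$ at $A$. A ring $T$ is residually Noetherian if $T/\mathfrak p$ is a Noetherian domain for every prime ideal $\mathfrak p$ of $T$. *)

From HB Require Import structures.
From mathcomp Require Import all_boot all_order all_algebra.
Set Implicit Arguments. Unset Strict Implicit. Unset Printing Implicit Defensive.
Import GRing.Theory.
Local Open Scope ring_scope.

Definition is_ideal (T : comPzRingType) (I : T -> Prop) : Prop :=
  I 0 /\ (forall x y, I x -> I y -> I (x + y)) /\ (forall a x, I x -> I (a * x)).

Definition is_prime_ideal (T : comPzRingType) (p : T -> Prop) : Prop :=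
  is_ideal p /\ ~ p 1 /\ (forall a b, p (a * b) -> p a \/ p b).

Definition in_ideal_span (T : comPzRingType) (p : T -> Prop) (s : seq T) (x : T) : Prop :=
  exists y, exists c : seq T,
    p y /\ size c = size s /\ x = y + \sum_(i < size s) c`_i * s`_i.

(* Ideals of T/p are identified with ideals J of T containing p (correspondence
   theorem); J/p finitely generated means J = p + (s) for a finite list s. *)
Definition quotient_noetherian (T : comPzRingType) (p : T -> Prop) : Prop :=
  forall J : T -> Prop, is_ideal J -> (forall x, p x -> J x) ->
    exists s : seq T, forall x, J x <-> in_ideal_span p s x.

Definition quotient_domain (T : comPzRingType) (p : T -> Prop) : Prop :=
  ~ p 1 /\ (forall a b, p (a * b) -> p a \/ p b).

Definition residually_noetherian (T : comPzRingType) : Prop :=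
  forall p : T -> Prop, is_prime_ideal p ->
    quotient_domain p /\ quotient_noetherian p.

Definition setA (R : comNzRingType) (f : {poly R}) : Prop := f.[0] = 1.

(* phi : R[X] -> T exhibits T as the localization R[X]_A (characterization by
   the standard universal/structural conditions, as Mathlib's IsLocalization). *)
Definition is_localization_A (R : comNzRingType) (T : comPzRingType) (phi : {rmorphism {poly R} -> T}) : Prop :=
  (forall a, setA a -> exists b, phi a * b = 1) /\
  (forall t, exists f a, setA a /\ t * phi a = phi f) /\
  (forall f g, phi f = phi g <-> exists a, setA a /\ a * f = a * g).

From HB Require Import structures.
From mathcomp Require Import all_boot all_order all_algebra.
From mathcomp Require Import zify ring.
From Stdlib Require Import ClassicalEpsilon.
Set Implicit Arguments. Unset Strict Implicit. Unset Printing Implicit Defensive.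
Import GRing.Theory.
Local Open Scope ring_scope.

(* Evaluation at 0 extends to a surjective ring morphism R[X]_A -> R
   (f / a with a(0) = 1 goes to f(0)), so every R/p is a quotient T/P and is
   Noetherian when T is residually Noetherian.  Conversely, a prime P of T
   contracts to a prime p of R with pR[X] inside the contraction Q of P to R[X];
   since R[X]/pR[X] = (R/p)[X] is Noetherian (Hilbert basis theorem, proved via
   the ideals of leading coefficients), so is R[X]/Q, and every ideal of T is
   generated by the image of its contraction because each element of T is a
   unit multiple of an element of the image of R[X]. *)

Section Ideals.
Variable T : comPzRingType.
Implicit Types (p q I J : T -> Prop) (s : seq T).

Lemma ideal_sum I (K : Type) (r : seq K) (P : pred K) (F : K -> T) :
  is_ideal I -> (forall i, P i -> I (F i)) -> I (\sum_(i <- r | P i) F i).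
Proof. by move=> [I0 [ID _]] IF; apply: big_ind. Qed.

Lemma ideal_oppr I x : is_ideal I -> I x -> I (- x).
Proof. by move=> [_ [_ IM]] Ix; rewrite -mulN1r; apply: IM. Qed.

Lemma ideal_mulr I x a : is_ideal I -> I x -> I (x * a).
Proof. by move=> [_ [_ IM]] Ix; rewrite mulrC; apply: IM. Qed.

Lemma is_ideal_span p s : is_ideal p -> is_ideal (in_ideal_span p s).
Proof.
move=> [p0 [pD pM]]; split; [|split].
- exists 0, (nseq (size s) 0); rewrite size_nseq add0r big1 // => i _.
  by rewrite nth_nseq if_same mul0r.
- move=> _ _ [y1 [c1 [py1 [_ ->]]]] [y2 [c2 [py2 [_ ->]]]].
  exists (y1 + y2), (mkseq (fun i => c1`_i + c2`_i) (size s)).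
  rewrite size_mkseq addrACA -big_split /=; split; first exact: pD.
  split=> //; congr (_ + _); apply: eq_bigr => i _.
  by rewrite nth_mkseq // mulrDl.
- move=> a _ [y [c [py [_ ->]]]].
  exists (a * y), (mkseq (fun i => a * c`_i) (size s)).
  rewrite size_mkseq mulrDr mulr_sumr; split; first exact: pM.
  split=> //; congr (_ + _); apply: eq_bigr => i _.
  by rewrite nth_mkseq // mulrA.
Qed.

Lemma span_base p s x : p x -> in_ideal_span p s x.
Proof.
move=> px; exists x, (nseq (size s) 0); rewrite size_nseq big1 ?addr0 // => i _.
by rewrite nth_nseq if_same mul0r.
Qed.

Lemma span_gen p s i : p 0 -> (i < size s)%N -> in_ideal_span p s s`_i.
Proof.
move=> p0 ltis; exists 0, (mkseq (fun j => (j == i)%:R) (size s)).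
rewrite size_mkseq add0r (bigD1 (Ordinal ltis)) //= nth_mkseq // eqxx mul1r.
do 2!split=> //; rewrite big1 ?addr0 // => j neq_ji.
have /negbTE neq_ji' : nat_of_ord j != i by exact: neq_ji.
by rewrite nth_mkseq // neq_ji' mul0r.
Qed.

Lemma span_mem p s x : p 0 -> x \in s -> in_ideal_span p s x.
Proof. by move=> p0 sx; rewrite -(nth_index 0 sx); apply: span_gen; rewrite ?index_mem. Qed.

Lemma span_min p J s x : is_ideal J -> (forall y, p y -> J y) ->
  {in s, forall g, J g} -> in_ideal_span p s x -> J x.
Proof.
move=> Jid pJ sJ [y [c [py [_ ->]]]]; have [_ [JD JM]] := Jid.
apply: JD; first exact: pJ.
by apply: ideal_sum => // i _; apply/JM/sJ/mem_nth.
Qed.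

Lemma span_subl p q s x : (forall y, p y -> q y) ->
  in_ideal_span p s x -> in_ideal_span q s x.
Proof. by move=> pq [y [c [py e]]]; exists y, c; split; first exact: pq. Qed.

Lemma span_map p (U : Type) (u0 : U) (h : U -> T) (G : seq U) x :
  in_ideal_span p (map h G) x ->
  exists y c, p y /\ x = y + \sum_(i < size G) c`_i * h (nth u0 G i).
Proof.
move=> [y [c [py [_ ->]]]]; exists y, c; split=> //; congr (_ + _).
rewrite -(big_mkord xpredT (fun i => c`_i * (map h G)`_i)) size_map big_mkord.
by apply: eq_bigr => i _; rewrite (nth_map u0).
Qed.

Lemma quotient_noetherian_subl p q : is_ideal p -> (forall x, p x -> q x) ->
  quotient_noetherian p -> quotient_noetherian q.
Proof.
move=> [p0 _] pq pN J Jid qJ; have [s sJ] := pN J Jid (fun x px => qJ x (pq x px)).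
exists s => x; split=> [/sJ /(span_subl pq) //|]; apply: span_min => // g /(span_mem p0).
by move/sJ.
Qed.

Lemma residually_noetherianP :
  residually_noetherian T <-> forall p, is_prime_ideal p -> quotient_noetherian p.
Proof.
split=> [rN p /rN [] //| pN p pP]; split; last exact: pN.
by case: pP => _ [].
Qed.

End Ideals.

Section Preimage.
Variables (U T : comPzRingType) (phi : {rmorphism U -> T}).
Implicit Types (p I : T -> Prop).

Lemma is_ideal_preim I : is_ideal I -> is_ideal (fun x => I (phi x)).
Proof.
move=> [I0 [ID IM]]; split; [|split]; first by rewrite rmorph0.
  by move=> x y Ix Iy; rewrite rmorphD; apply: ID.
by move=> a x Ix; rewrite rmorphM; apply: IM.
Qed.

Lemma is_prime_preim p : is_prime_ideal p -> is_prime_ideal (fun x => p (phi x)).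
Proof.
move=> [pI [p1 pM]]; split; first exact: is_ideal_preim.
by rewrite rmorph1; split=> // a b; rewrite rmorphM; apply: pM.
Qed.

Lemma span_rmorph p s x :
  in_ideal_span (fun y => p (phi y)) s x -> in_ideal_span p (map phi s) (phi x).
Proof.
move=> [y [c [py [sc ->]]]]; exists (phi y), (map phi c).
rewrite !size_map sc rmorphD rmorph_sum; do 2!split=> //; congr (_ + _).
by apply: eq_bigr => i _; rewrite rmorphM !(nth_map 0) // sc.
Qed.

(* Satisfied by surjective maps and by localization maps. *)
Hypothesis image_assoc : forall t, exists f u v, t = phi f * u /\ phi f = t * v.

Lemma quotient_noetherian_preim p : is_ideal p ->
  quotient_noetherian (fun x => p (phi x)) -> quotient_noetherian p.
Proof.
move=> pI pN J JI pJ; have [s sJ] := pN _ (is_ideal_preim JI) (fun x => pJ (phi x)).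
have p0 : p 0 by case: pI.
exists (map phi s) => t; split=> [Jt|].
  have [f [u [v [tf ft]]]] := image_assoc t.
  rewrite tf; apply: ideal_mulr; first exact: is_ideal_span.
  by apply: span_rmorph; apply/sJ; rewrite ft; apply: ideal_mulr.
apply: span_min => // _ /mapP [g sg ->]; apply/sJ/span_mem => //.
by rewrite rmorph0.
Qed.

End Preimage.

Lemma lift_through_map (A B : eqType) (Q : A -> Prop) (h : A -> B) (s : seq B) :
  {in s, forall b, exists2 a, Q a & h a = b} ->
  exists2 G : seq A, (forall a, a \in G -> Q a) & map h G = s.
Proof.
elim: s => [|b s IH] sQ; first by exists [::].
have [a Qa <-] := sQ b (mem_head _ _).
have [G GQ <-] := IH (fun c cs => sQ c (@mem_behead _ (b :: s) c cs)).
by exists (a :: G) => // c; rewrite inE => /predU1P [->|/GQ].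
Qed.

Lemma chain_bound (A : eqType) (L : nat -> A -> Prop) (s : seq A) :
  (forall n m a, (n <= m)%N -> L n a -> L m a) ->
  {in s, forall a, exists n, L n a} -> exists N, {in s, forall a, L N a}.
Proof.
move=> Lmono; elim: s => [|a s IH] sL; first by exists 0%N.
have [n Lna] := sL a (mem_head _ _).
have [N sN] := IH (fun b bs => sL b (@mem_behead _ (a :: s) b bs)).
exists (maxn n N) => b; rewrite inE => /predU1P [->|bs].
  exact: Lmono (leq_maxl _ _) Lna.
exact: Lmono (leq_maxr _ _) (sN b bs).
Qed.

Section HilbertBasis.
Variables (R : comNzRingType) (p : R -> Prop).
Hypotheses (pI : is_ideal p) (pN : quotient_noetherian p).

Definition coefs_in (f : {poly R}) := forall i, p f`_i.

Lemma is_ideal_coefs_in : is_ideal coefs_in.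
Proof.
have [p0 [pD pM]] := pI; split; [|split].
- by move=> i; rewrite coef0.
- by move=> f g pf pg i; rewrite coefD; apply: pD.
- move=> a f pf i; rewrite coefM; apply: ideal_sum => // j _; exact: pM.
Qed.

Lemma coefs_in_scaleXn r n : p r -> coefs_in (r *: 'X^n).
Proof. by move=> pr i; rewrite coefZ; apply: ideal_mulr. Qed.

Section LeadCoefs.
Variable J : {poly R} -> Prop.
Hypotheses (JI : is_ideal J) (coefs_inJ : forall f, coefs_in f -> J f).

Definition lead_coefs n r := exists f, J f /\ (size f <= n.+1)%N /\ f`_n = r.

Lemma is_ideal_lead_coefs n : is_ideal (lead_coefs n).
Proof.
have [J0 [JD JM]] := JI; split; [|split].
- by exists 0; rewrite size_poly0 coef0.
- move=> _ _ [f [Jf [sf <-]]] [g [Jg [sg <-]]]; exists (f + g).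
  rewrite coefD; split; first exact: JD.
  split=> //; apply: leq_trans (size_polyD _ _) _.
  by rewrite geq_max sf sg.
- move=> a _ [f [Jf [sf <-]]]; exists (a *: f).
  rewrite coefZ -mul_polyC; split; first exact: JM.
  by rewrite mul_polyC (leq_trans (size_scale_leq _ _)).
Qed.

Lemma lead_coefs_base n r : p r -> lead_coefs n r.
Proof.
move=> pr; exists (r *: 'X^n); split; first exact/coefs_inJ/coefs_in_scaleXn.
by rewrite coefZ coefXn eqxx mulr1 (leq_trans (size_scale_leq _ _)) ?size_polyXn.
Qed.

Lemma lead_coefs_mono n m r : (n <= m)%N -> lead_coefs n r -> lead_coefs m r.
Proof.
move=> le_nm [f [Jf [sf <-]]]; exists ('X^(m - n) * f).
rewrite coefXnM ltnNge leq_subr subKn //; split; first exact: (proj2 (proj2 JI)).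
split=> //; apply: leq_trans (size_polyMleq _ _) _; rewrite size_polyXn; lia.
Qed.

Lemma lead_coefs_stable : exists N, forall n r, lead_coefs n r -> lead_coefs N r.
Proof.
pose Linf r := exists n, lead_coefs n r.
have LinfI : is_ideal Linf.
  split; [|split].
  - by exists 0%N; case: (is_ideal_lead_coefs 0).
  - move=> x y [n Lx] [m Ly]; exists (maxn n m).
    have [_ [LD _]] := is_ideal_lead_coefs (maxn n m).
    by apply: LD; [apply: lead_coefs_mono Lx | apply: lead_coefs_mono Ly];
      rewrite ?leq_maxl ?leq_maxr.
  - by move=> a x [n Lx]; exists n; case: (is_ideal_lead_coefs n) => _ [_]; apply.
have p0 : p 0 by case: pI.
have [s sL] := pN LinfI (fun r pr => ex_intro _ 0%N (lead_coefs_base 0 pr)).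
have [N sN] := chain_bound lead_coefs_mono (fun r rs => proj2 (sL r) (span_mem p0 rs)).
exists N => n r Lr; apply: span_min (is_ideal_lead_coefs N) (lead_coefs_base N) sN _.
by apply/sL; exists n.
Qed.

Definition lead_gens n (Gn : seq {poly R}) :=
  (forall g, g \in Gn -> J g /\ (size g <= n.+1)%N) /\
  forall r, lead_coefs n r -> in_ideal_span p (map (coefp n) Gn) r.

Lemma lead_gens_exist n : exists Gn, lead_gens n Gn.
Proof.
have p0 : p 0 by case: pI.
have [s sL] := pN (is_ideal_lead_coefs n) (lead_coefs_base n).
have [|Gn GnJ Gns] := @lift_through_map _ _ (fun g => J g /\ (size g <= n.+1)%N) (coefp n) s.
  by move=> r /(span_mem p0)/sL [g [Jg [sg <-]]]; exists g.
by exists Gn; split=> // r /sL; rewrite Gns.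
Qed.

Section Reduction.
Variables (N : nat) (Gs : 'I_N.+1 -> seq {poly R}).
Hypotheses (stableN : forall n r, lead_coefs n r -> lead_coefs N r)
           (GsP : forall n : 'I_N.+1, lead_gens n (Gs n)).

Let G := flatten (map Gs (enum 'I_N.+1)).

Lemma mem_lead_gens n g : g \in Gs n -> g \in G.
Proof. by move=> gn; apply/flattenP; exists (Gs n); rewrite ?map_f ?mem_enum. Qed.

Lemma lead_gensJ : {in G, forall g, J g}.
Proof. by move=> g /flattenP [_ /mapP [n _ ->] /(proj1 (GsP n)) []]. Qed.

(* Cancel the X^k-coefficient of f with a combination of X^(k-m) * g, g in
   Gs m, where m = min k N. *)
Lemma lead_reduce k f : J f -> (size f <= k.+1)%N ->
  exists2 h, in_ideal_span coefs_in G h & (size (f - h)%R <= k)%N.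
Proof.
move=> Jf sf; pose m := minn k N; have le_mk : (m <= k)%N := geq_minl k N.
have lt_mN : (m < N.+1)%N by rewrite ltnS geq_minr.
have [GmP Lgen] := GsP (Ordinal lt_mN); set Gm := Gs _ in GmP Lgen.
have Lfk : lead_coefs m f`_k.
  have Lkfk : lead_coefs k f`_k by exists f.
  by rewrite /m; case: leqP => // _; apply: stableN Lkfk.
have [y [c [py fk]]] := span_map 0 (Lgen _ Lfk).
pose h := y *: 'X^k + \sum_(i < size Gm) c`_i *: ('X^(k - m) * Gm`_i).
have spanI := is_ideal_span G is_ideal_coefs_in; have [_ [SD SM]] := spanI.
exists h.
  apply: SD; first exact/span_base/coefs_in_scaleXn.
  apply: ideal_sum => // i _.
  rewrite -mul_polyC mulrA; apply/SM/span_mem; first by case: is_ideal_coefs_in.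
  exact/(mem_lead_gens (n := Ordinal lt_mN))/mem_nth.
apply/leq_sizeP => j le_kj; rewrite coefB coefD coefZ coefXn coef_sum.
under eq_bigr => i _ do rewrite coefZ coefXnM ltnNge (leq_trans (leq_subr _ _) le_kj).
case: (ltngtP k j) le_kj => // [lt_kj _ | <- _].
  rewrite (leq_sizeP _ _ sf) // big1 ?mulr0 ?addr0 ?subrr // => i _ /=.
  have [_ sg] := GmP _ (mem_nth 0 (ltn_ord i)).
  by rewrite (leq_sizeP _ _ sg) ?mulr0 //= -/m; lia.
by rewrite /= mulr1 subKn // fk; apply/eqP; rewrite subr_eq0.
Qed.

Lemma span_lead_gens f : J f -> in_ideal_span coefs_in G f.
Proof.
have spanI := is_ideal_span G is_ideal_coefs_in; have [S0 [SD _]] := spanI.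
have [_ [JD _]] := JI.
have spanJ := span_min JI coefs_inJ lead_gensJ.
move: {2}(size f) (leqnn (size f)) => k; elim: k f => [|k IH] f sf Jf.
  by move: sf; rewrite size_poly_leq0 => /eqP ->.
have [h hG sfh] := lead_reduce Jf sf.
have Jfh : J (f - h) := JD _ _ Jf (ideal_oppr JI (spanJ _ hG)).
by rewrite -(subrK h f); apply: SD hG; apply: IH sfh Jfh.
Qed.

End Reduction.
End LeadCoefs.

Theorem Hilbert_basis : quotient_noetherian coefs_in.
Proof.
move=> J JI coefs_inJ; have [N stableN] := lead_coefs_stable JI coefs_inJ.
have /fin_all_exists [Gs GsP] : forall n : 'I_N.+1, exists Gn, lead_gens J n Gn.
  by move=> n; apply: lead_gens_exist.
exists (flatten (map Gs (enum 'I_N.+1))) => f; split.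
  exact: span_lead_gens.
by apply: span_min => //; apply: lead_gensJ.
Qed.

End HilbertBasis.

Lemma coefs_in_preim (R : comNzRingType) (T : comPzRingType)
    (phi : {rmorphism {poly R} -> T}) (P : T -> Prop) (f : {poly R}) :
  is_ideal P -> coefs_in (fun r => P (phi r%:P)) f -> P (phi f).
Proof.
move=> PI Pf; rewrite -[f]coefK poly_def rmorph_sum; apply: ideal_sum => // i _.
by rewrite -mul_polyC rmorphM; apply: ideal_mulr.
Qed.

Lemma setA1 (R : comNzRingType) : setA (1 : {poly R}).
Proof. by rewrite /setA hornerC. Qed.

Lemma setAM (R : comNzRingType) (a b : {poly R}) : setA a -> setA b -> setA (a * b).
Proof. by rewrite /setA hornerM => -> ->; rewrite mulr1. Qed.

Section LocalizationEval.
Variables (R : comNzRingType) (T : comPzRingType) (phi : {rmorphism {poly R} -> T}).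
Hypothesis phi_loc : is_localization_A phi.

Lemma loc_frac t : exists f a, setA a /\ t * phi a = phi f.
Proof. by case: phi_loc => _ [+ _]; apply. Qed.

Lemma loc_assoc t : exists f u v, t = phi f * u /\ phi f = t * v.
Proof.
have [f [a [Aa tf]]] := loc_frac t; have [u au] := phi_loc.1 a Aa.
by exists f, u, (phi a); rewrite -tf -mulrA au mulr1.
Qed.

(* Sends t = f / a, a(0) = 1, to f(0), for some chosen numerator f. *)
Definition loc_eval (t : T) : R :=
  (proj1_sig (constructive_indefinite_description _ (loc_frac t))).[0].

Lemma loc_evalE t f a : setA a -> t * phi a = phi f -> loc_eval t = f.[0].
Proof.
move=> Aa tf; rewrite /loc_eval.
case: constructive_indefinite_description => g [b [Ab tg]] /=.
have [c [Ac e]] : exists c, setA c /\ c * (b * f) = c * (a * g).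
  by apply/(proj2 (proj2 phi_loc)); rewrite !rmorphM -tf -tg; ring.
by have := congr1 (fun q => q.[0]) e; rewrite !hornerM Ac Aa Ab !mul1r.
Qed.

Lemma loc_eval_phi f : loc_eval (phi f) = f.[0].
Proof. by apply: loc_evalE (setA1 R) _; rewrite rmorph1 mulr1. Qed.

Lemma loc_eval_is_nmod_morphism : nmod_morphism loc_eval.
Proof.
split=> [|x y]; first by rewrite -(rmorph0 phi) loc_eval_phi horner0.
have [f [a [Aa xf]]] := loc_frac x; have [g [b [Ab yg]]] := loc_frac y.
have xyfg : (x + y) * phi (a * b) = phi (f * b + g * a).
  by rewrite rmorphD !rmorphM -xf -yg; ring.
rewrite (loc_evalE (setAM Aa Ab) xyfg) (loc_evalE Aa xf) (loc_evalE Ab yg).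
by rewrite hornerD !hornerM Aa Ab !mulr1.
Qed.

Lemma loc_eval_is_monoid_morphism : monoid_morphism loc_eval.
Proof.
split=> [|x y]; first by rewrite -(rmorph1 phi) loc_eval_phi hornerC.
have [f [a [Aa xf]]] := loc_frac x; have [g [b [Ab yg]]] := loc_frac y.
have xyfg : (x * y) * phi (a * b) = phi (f * g) by rewrite !rmorphM -xf -yg; ring.
by rewrite (loc_evalE (setAM Aa Ab) xyfg) (loc_evalE Aa xf) (loc_evalE Ab yg) hornerM.
Qed.

HB.instance Definition _ :=
  GRing.isNmodMorphism.Build T R loc_eval loc_eval_is_nmod_morphism.
HB.instance Definition _ :=
  GRing.isMonoidMorphism.Build T R loc_eval loc_eval_is_monoid_morphism.

End LocalizationEval.

Theorem mainTheorem3 (R : comNzRingType) (T : comPzRingType) (phi : {rmorphism {poly R} -> T}) :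
  is_localization_A phi ->
  (residually_noetherian T <-> residually_noetherian R).
Proof.
move=> phi_loc; rewrite !residually_noetherianP; split=> rN P [PI PP].
- apply: (quotient_noetherian_preim (phi := loc_eval phi_loc)) => //.
    by move=> r; exists (phi r%:P), 1, 1; rewrite /= loc_eval_phi hornerC mulr1.
  exact/rN/is_prime_preim.
- have PR := is_prime_preim (phi \o polyC) (conj PI PP).
  apply: (quotient_noetherian_preim (loc_assoc phi_loc) PI).
  apply: quotient_noetherian_subl (Hilbert_basis PR.1 (rN _ PR)).
    exact: is_ideal_coefs_in PR.1.
  by move=> f; apply: coefs_in_preim.
Qed.
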